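(* Let $a\geq b\geq c\geq d>0$. If $ad-bc>0$, then $$\frac{H(a,b)}{H(c,d)}<\frac{G(a,b)}{G(c,d)}<\frac{L(a,b)}{L(c,d)}<\frac{I(a,b)}{I(c,d)}<\frac{A(a,b)}{A(c,d)}.$$ If $ad-bc<0$, all these inequalities are reversed (strictly), and if $ad-bc=0$, all of them become equalities.
   Context: For $u,v>0$: $A(u,v)=\frac{u+v}{2}$, $G(u,v)=\sqrt{uv}$, $H(u,v)=\frac{2}{1/u+1/v}$; the logarithmic mean is $L(u,v)=\frac{u-v}{\ln u-\ln v}$ if $u\neq v$ and $L(u,u)=u$; the identric mean is $I(u,v)=\frac{1}{e}\left(\frac{u^u}{v^v}\right)^{1/(u-v)}$ if $u\neq v$ and $I(u,u)=u$. *)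

From Stdlib Require Import Reals.
Open Scope R_scope.

Definition AM (u v : R) : R := (u + v) / 2.
Definition GM (u v : R) : R := sqrt (u * v).
Definition HM (u v : R) : R := 2 / (/ u + / v).
Definition LM (u v : R) : R :=
  if Req_EM_T u v then u else (u - v) / (ln u - ln v).
Definition IM (u v : R) : R :=
  if Req_EM_T u v then u
  else / exp 1 * Rpower (Rpower u u / Rpower v v) (/ (u - v)).

(* Write a = e^(w1+s1), b = e^(w1-s1), c = e^(w2+s2), d = e^(w2-s2) with s1, s2 >= 0.
   Each of the five means factors as M(e^(w+s), e^(w-s)) = e^w mu_M(s), with
   mu_H = 1/cosh, mu_G = 1, mu_L = sinh s / s, mu_I = exp (s coth s - 1), mu_A = cosh.
   Hence M(a,b)/M(c,d) < N(a,b)/N(c,d) iff (mu_N/mu_M)(s2) < (mu_N/mu_M)(s1), and each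
   quotient of consecutive profiles is strictly increasing on [0, oo): its logarithm
   has positive derivative, by s < sinh s < s cosh s.  Finally ad - bc has the sign
   of s1 - s2. *)

From Stdlib Require Import Reals Lra.
From Coquelicot Require Import Coquelicot.
Open Scope R_scope.

Lemma strict_increasing_from_0 (f df : R -> R) :
  (forall x, 0 < x -> is_derive f x (df x)) ->
  (forall x, 0 < x -> 0 < df x) ->
  continuity_pt f 0 ->
  forall x y, 0 <= y -> y < x -> f y < f x.
Proof.
  intros Hder Hpos Hcont.
  assert (Hopen : forall x y, 0 < y -> y < x -> f y < f x).
  { intros x y Hy Hxy.
    apply (incr_function f (Finite 0) p_infty df); simpl; intros; auto.
    now apply Hpos. }
  intros x y [Hy | <-] Hxy; [now apply Hopen |].
  (* f < f (x / 2) on (0, x / 2), so by continuity f 0 <= f (x / 2). *)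
  assert (Hhalf : f 0 <= f (x / 2)).
  { apply Rnot_lt_le; intro Hlt.
    destruct (Hcont (f 0 - f (x / 2))) as (delta & Hdelta & Hnear); [lra |].
    set (u := Rmin (delta / 2) (x / 4)).
    assert (Hu : 0 < u <= x / 4 /\ u <= delta / 2).
    { unfold u; repeat split; [apply Rmin_pos | apply Rmin_r | apply Rmin_l]; lra. }
    assert (Hfu : Rabs (f u - f 0) < f 0 - f (x / 2)).
    { apply (Hnear u); split; [split; [exact I | lra] |].
      simpl; unfold R_dist; rewrite Rminus_0_r, Rabs_pos_eq; lra. }
    assert (f u < f (x / 2)) by (apply Hopen; lra).
    apply Rabs_def2 in Hfu; lra. }
  assert (f (x / 2) < f x) by (apply Hopen; lra).
  lra.
Qed.

Lemma is_derive_cosh x : is_derive cosh x (sinh x).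
Proof. apply is_derive_Reals, derivable_pt_lim_cosh. Qed.

Lemma continuity_pt_cosh x : continuity_pt cosh x.
Proof. apply derivable_continuous_pt, derivable_pt_cosh. Qed.

Lemma cosh_pos x : 0 < cosh x.
Proof. unfold cosh; generalize (exp_pos x) (exp_pos (- x)); lra. Qed.

Lemma sinh_pos x : 0 < x -> 0 < sinh x.
Proof. intro Hx; rewrite <- sinh_0; now apply sinh_lt. Qed.

Lemma cosh2_sub_sinh2 x : cosh x * cosh x - sinh x * sinh x = 1.
Proof.
  unfold cosh, sinh; rewrite exp_Ropp.
  generalize (exp_pos x); intro; field; lra.
Qed.

Lemma cosh_increasing x y : 0 <= y -> y < x -> cosh y < cosh x.
Proof.
  apply (strict_increasing_from_0 cosh sinh).
  - intros; apply is_derive_cosh.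
  - exact sinh_pos.
  - apply continuity_pt_cosh.
Qed.

Lemma id_lt_sinh x : 0 < x -> x < sinh x.
Proof.
  intro Hx.
  assert (Hder : forall y, is_derive (fun y => sinh y - y) y (cosh y - 1)).
  { intro y; unfold sinh, cosh; auto_derive; [easy | lra]. }
  assert (H : sinh 0 - 0 < sinh x - x).
  { apply (strict_increasing_from_0 _ _ (fun y _ => Hder y)); try lra.
    - intros y Hy; generalize (cosh2_sub_sinh2 y) (sinh_pos y Hy) (cosh_pos y); nra.
    - apply derivable_continuous_pt; eexists; apply is_derive_Reals, Hder. }
  rewrite sinh_0 in H; lra.
Qed.

Lemma sinh_lt_mul_cosh x : 0 < x -> sinh x < x * cosh x.
Proof.
  intro Hx.
  assert (Hder : forall y, is_derive (fun y => y * cosh y - sinh y) y (y * sinh y)).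
  { intro y; unfold sinh, cosh; auto_derive; [easy | lra]. }
  assert (H : 0 * cosh 0 - sinh 0 < x * cosh x - sinh x).
  { apply (strict_increasing_from_0 _ _ (fun y _ => Hder y)); try lra.
    - intros y Hy; generalize (sinh_pos y Hy); nra.
    - apply derivable_continuous_pt; eexists; apply is_derive_Reals, Hder. }
  rewrite sinh_0 in H; lra.
Qed.

Definition sinhc (x : R) : R := if Req_EM_T x 0 then 1 else sinh x / x.

Lemma sinhc_0 : sinhc 0 = 1.
Proof. unfold sinhc; destruct (Req_EM_T 0 0); [easy | lra]. Qed.

Lemma sinhc_eq x : x <> 0 -> sinhc x = sinh x / x.
Proof. intro Hx; unfold sinhc; now destruct (Req_EM_T x 0). Qed.

Lemma sinhc_pos x : 0 <= x -> 0 < sinhc x.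
Proof.
  intros [Hx | <-]; [| rewrite sinhc_0; lra].
  rewrite sinhc_eq by lra; apply Rdiv_lt_0_compat; [apply sinh_pos |]; lra.
Qed.

Lemma sinhc_locally z : 0 < z -> locally z (fun y => sinhc y = sinh y / y).
Proof.
  intro Hz; exists (mkposreal z Hz); intros y Hy.
  apply sinhc_eq.
  unfold ball in Hy; simpl in Hy; unfold AbsRing_ball, abs, minus, plus, opp in Hy; simpl in Hy.
  apply Rabs_def2 in Hy; lra.
Qed.

Lemma continuity_pt_sinhc_0 : continuity_pt sinhc 0.
Proof.
  assert (Hder : derivable_pt_lim sinh 0 1).
  { rewrite <- cosh_0; apply derivable_pt_lim_sinh. }
  intros eps Heps; destruct (Hder eps Heps) as (delta & Hdelta).
  exists delta; split; [apply cond_pos |].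
  intros x ((_ & Hx0) & Hx); simpl in *; unfold R_dist in *.
  rewrite sinhc_0, sinhc_eq by congruence; rewrite Rminus_0_r in Hx.
  specialize (Hdelta x (not_eq_sym Hx0) Hx).
  now rewrite Rplus_0_l, sinh_0, Rminus_0_r in Hdelta.
Qed.

Lemma sinhc_increasing x y : 0 <= y -> y < x -> sinhc y < sinhc x.
Proof.
  apply (strict_increasing_from_0 sinhc
           (fun x => (x * cosh x - sinh x) / (x * x))).
  - intros z Hz; apply (is_derive_ext_loc (fun y => sinh y / y)).
    + generalize (sinhc_locally z Hz); apply filter_imp; now intros u ->.
    + unfold sinh, cosh; auto_derive; [lra | field; lra].
  - intros z Hz; generalize (sinh_lt_mul_cosh z Hz); intro.
    apply Rdiv_lt_0_compat; nra.
  - exact continuity_pt_sinhc_0.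
Qed.

(* [x coth x], extended by its limit 1 at 0. *)
Definition xcoth (x : R) : R := cosh x / sinhc x.

Lemma continuity_pt_xcoth_0 : continuity_pt xcoth 0.
Proof.
  apply (continuity_pt_div cosh sinhc); [apply continuity_pt_cosh | |].
  - exact continuity_pt_sinhc_0.
  - rewrite sinhc_0; lra.
Qed.

Lemma continuity_pt_ln x : 0 < x -> continuity_pt ln x.
Proof. intro Hx; apply derivable_continuous_pt; exists (/ x); now apply derivable_pt_lim_ln. Qed.

Lemma xcoth_sub_ln_sinhc_increasing x y : 0 <= y -> y < x ->
  xcoth y - ln (sinhc y) < xcoth x - ln (sinhc x).
Proof.
  apply (strict_increasing_from_0 (fun s => xcoth s - ln (sinhc s))
           (fun s => 1 / s - s / (sinh s * sinh s))).
  - intros z Hz.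
    apply (is_derive_ext_loc (fun y => cosh y / (sinh y / y) - ln (sinh y / y))).
    + generalize (sinhc_locally z Hz); apply filter_imp; intros u Hu.
      now unfold xcoth; rewrite Hu.
    + assert (Hsinh : 0 < sinh z) by now apply sinh_pos.
      assert (0 < sinh z / z) by now apply Rdiv_lt_0_compat.
      assert (1 < exp z) by (rewrite <- exp_0; now apply exp_increasing).
      unfold sinh, cosh in *; auto_derive.
      * unfold Rminus, Rdiv in *; repeat split; lra.
      * rewrite !exp_Ropp in *; field; repeat split; try lra; apply Rgt_not_eq; nra.
  - intros z Hz; generalize (id_lt_sinh z Hz); intro.
    replace (1 / z - z / (sinh z * sinh z))
      with ((sinh z * sinh z - z * z) / (z * (sinh z * sinh z))) by (field; lra).
    apply Rdiv_lt_0_compat; [nra | apply Rmult_lt_0_compat; nra].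
  - apply continuity_pt_minus; [exact continuity_pt_xcoth_0 |].
    apply (continuity_pt_comp sinhc ln); [exact continuity_pt_sinhc_0 |].
    rewrite sinhc_0; apply continuity_pt_ln; lra.
Qed.

Lemma ln_cosh_sub_xcoth_increasing x y : 0 <= y -> y < x ->
  ln (cosh y) - xcoth y < ln (cosh x) - xcoth x.
Proof.
  apply (strict_increasing_from_0 (fun s => ln (cosh s) - xcoth s)
           (fun s => (s * cosh s - sinh s) / (sinh s * sinh s * cosh s))).
  - intros z Hz.
    apply (is_derive_ext_loc (fun y => ln (cosh y) - cosh y / (sinh y / y))).
    + generalize (sinhc_locally z Hz); apply filter_imp; intros u Hu.
      now unfold xcoth; rewrite Hu.
    + assert (Hsinh : 0 < sinh z) by now apply sinh_pos.
      assert (0 < sinh z / z) by now apply Rdiv_lt_0_compat.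
      assert (0 < cosh z) by apply cosh_pos.
      assert (1 < exp z) by (rewrite <- exp_0; now apply exp_increasing).
      unfold sinh, cosh in *; auto_derive.
      * unfold Rminus, Rdiv in *; repeat split; lra.
      * rewrite !exp_Ropp in *; field; repeat split; try lra; apply Rgt_not_eq; nra.
  - intros z Hz; generalize (sinh_lt_mul_cosh z Hz) (sinh_pos z Hz) (cosh_pos z); intros.
    apply Rdiv_lt_0_compat; [lra | apply Rmult_lt_0_compat; nra].
  - apply continuity_pt_minus; [| exact continuity_pt_xcoth_0].
    apply (continuity_pt_comp cosh ln); [apply continuity_pt_cosh |].
    apply continuity_pt_ln, cosh_pos.
Qed.

Definition mean_profile (M : R -> R -> R) (mu : R -> R) : Prop :=
  (forall s, 0 <= s -> 0 < mu s) /\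
  (forall w s, M (exp (w + s)) (exp (w - s)) = exp w * mu s).

Lemma exp_center_radius u v : 0 < v -> v <= u ->
  exists w s, 0 <= s /\ u = exp (w + s) /\ v = exp (w - s).
Proof.
  intros Hv Hvu; exists ((ln u + ln v) / 2), ((ln u - ln v) / 2); split; [| split].
  - assert (ln v <= ln u) by (apply ln_le; lra); lra.
  - replace ((ln u + ln v) / 2 + (ln u - ln v) / 2) with (ln u) by field.
    rewrite exp_ln; lra.
  - replace ((ln u + ln v) / 2 - (ln u - ln v) / 2) with (ln v) by field.
    now rewrite exp_ln.
Qed.

Lemma exp_center_eq w s : exp (w + s) = exp (w - s) <-> s = 0.
Proof.
  split; [intro E; apply exp_inv in E; lra | intros ->; now rewrite Rplus_0_r, Rminus_0_r].
Qed.

Lemma exp_add_sub w s : exp (w + s) = exp w * exp s /\ exp (w - s) = exp w / exp s.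
Proof. unfold Rminus, Rdiv; rewrite !exp_plus, exp_Ropp; now split. Qed.

Lemma AM_profile : mean_profile AM cosh.
Proof.
  split; [intros; apply cosh_pos |].
  intros w s; unfold AM, cosh; destruct (exp_add_sub w s) as (-> & ->).
  rewrite exp_Ropp; generalize (exp_pos s); intro; field; lra.
Qed.

Lemma GM_profile : mean_profile GM (fun _ => 1).
Proof.
  split; [intros; lra |].
  intros w s; unfold GM; rewrite <- exp_plus.
  replace (w + s + (w - s)) with (w + w) by ring.
  rewrite exp_plus, Rmult_1_r; apply sqrt_square, Rlt_le, exp_pos.
Qed.

Lemma HM_profile : mean_profile HM (fun s => / cosh s).
Proof.
  split; [intros; apply Rinv_0_lt_compat, cosh_pos |].
  intros w s; unfold HM, cosh; destruct (exp_add_sub w s) as (-> & ->).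
  rewrite exp_Ropp; generalize (exp_pos w) (exp_pos s); intros.
  field; repeat split; try lra; apply Rgt_not_eq; nra.
Qed.

Lemma LM_profile : mean_profile LM sinhc.
Proof.
  split; [exact sinhc_pos |].
  intros w s; unfold LM; destruct (Req_EM_T _ _) as [E | E].
  - apply exp_center_eq in E as ->.
    now rewrite sinhc_0, Rplus_0_r, Rmult_1_r.
  - assert (Hs : s <> 0) by now rewrite <- (exp_center_eq w s).
    rewrite sinhc_eq, !ln_exp by easy; unfold sinh.
    destruct (exp_add_sub w s) as (-> & ->); rewrite exp_Ropp.
    generalize (exp_pos s); intro; field; lra.
Qed.

Lemma IM_profile : mean_profile IM (fun s => exp (xcoth s - 1)).
Proof.
  split; [intros; apply exp_pos |].
  intros w s; unfold IM; destruct (Req_EM_T _ _) as [E | E].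
  - apply exp_center_eq in E as ->.
    unfold xcoth; rewrite sinhc_0, cosh_0, Rplus_0_r.
    replace (1 / 1 - 1) with 0 by field; now rewrite exp_0, Rmult_1_r.
  - assert (Hs : s <> 0) by now rewrite <- (exp_center_eq w s).
    set (u := exp (w + s)) in *; set (v := exp (w - s)) in *.
    assert (Huv : u - v <> 0) by (intro; apply E; lra).
    assert (Hexponent : / (u - v) * (u * ln u - v * ln v) = w + xcoth s).
    { unfold xcoth; rewrite sinhc_eq by easy; unfold u, v in *; rewrite !ln_exp.
      unfold sinh, cosh; destruct (exp_add_sub w s) as (Ep & Em).
      rewrite Ep, Em in *; rewrite exp_Ropp.
      assert (Hsq : exp s * exp s - 1 <> 0).
      { intro Z; apply Hs.
        assert (Ess : exp (s + s) = exp 0) by (rewrite exp_plus, exp_0; lra).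
        apply exp_inv in Ess; lra. }
      generalize (exp_pos w) (exp_pos s); intros.
      field; repeat split; try lra.
      replace (exp w * exp s * exp s - exp w) with (exp w * (exp s * exp s - 1)) by ring.
      apply Rmult_integral_contrapositive; split; lra. }
    unfold Rpower at 1.
    rewrite ln_div, !ln_Rpower, Hexponent by (unfold Rpower; apply exp_pos).
    rewrite <- exp_Ropp, <- !exp_plus; f_equal; ring.
Qed.

Definition ratio_increasing (mu nu : R -> R) : Prop :=
  forall x y, 0 <= y -> y < x -> nu y / mu y < nu x / mu x.

Lemma scaled_ratio_lt e1 e2 m1 m2 n1 n2 :
  0 < e1 -> 0 < e2 -> 0 < m1 -> 0 < m2 -> 0 < n1 -> 0 < n2 ->
  n2 / m2 < n1 / m1 -> e1 * m1 / (e2 * m2) < e1 * n1 / (e2 * n2).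
Proof.
  intros He1 He2 Hm1 Hm2 Hn1 Hn2 Hn.
  assert (Hscale : 0 < e1 * m1 / (e2 * n2)).
  { apply Rdiv_lt_0_compat; apply Rmult_lt_0_compat; easy. }
  apply Rlt_0_minus.
  replace (e1 * n1 / (e2 * n2) - e1 * m1 / (e2 * m2))
    with (e1 * m1 / (e2 * n2) * (n1 / m1 - n2 / m2)) by (field; lra).
  apply Rmult_lt_0_compat; lra.
Qed.

Section MeanRatios.

Context {M N : R -> R -> R} {mu nu : R -> R}.
Hypotheses (M_profile : mean_profile M mu) (N_profile : mean_profile N nu)
  (ratio_incr : ratio_increasing mu nu).

Lemma mean_ratio_lt w1 s1 w2 s2 : 0 <= s2 -> s2 < s1 ->
  M (exp (w1 + s1)) (exp (w1 - s1)) / M (exp (w2 + s2)) (exp (w2 - s2)) <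
  N (exp (w1 + s1)) (exp (w1 - s1)) / N (exp (w2 + s2)) (exp (w2 - s2)).
Proof.
  destruct M_profile as (mu_pos & M_eq), N_profile as (nu_pos & N_eq); intros.
  rewrite !M_eq, !N_eq.
  apply scaled_ratio_lt; try apply exp_pos; try apply mu_pos; try apply nu_pos; try lra.
  now apply ratio_incr.
Qed.

Lemma mean_ratio_gt w1 s1 w2 s2 : 0 <= s1 -> s1 < s2 ->
  M (exp (w1 + s1)) (exp (w1 - s1)) / M (exp (w2 + s2)) (exp (w2 - s2)) >
  N (exp (w1 + s1)) (exp (w1 - s1)) / N (exp (w2 + s2)) (exp (w2 - s2)).
Proof.
  destruct M_profile as (mu_pos & M_eq), N_profile as (nu_pos & N_eq); intros.
  rewrite !M_eq, !N_eq.
  assert (0 < mu s1 /\ 0 < mu s2) as [] by (split; apply mu_pos; lra).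
  assert (0 < nu s1 /\ 0 < nu s2) as [] by (split; apply nu_pos; lra).
  apply scaled_ratio_lt; try apply exp_pos; try easy.
  rewrite <- (Rinv_div (nu s2)), <- (Rinv_div (nu s1)).
  apply Rinv_lt_contravar; [| now apply ratio_incr].
  apply Rmult_lt_0_compat; now apply Rdiv_lt_0_compat.
Qed.

Lemma mean_ratio_eq w1 w2 s : 0 <= s ->
  M (exp (w1 + s)) (exp (w1 - s)) / M (exp (w2 + s)) (exp (w2 - s)) =
  N (exp (w1 + s)) (exp (w1 - s)) / N (exp (w2 + s)) (exp (w2 - s)).
Proof.
  destruct M_profile as (mu_pos & M_eq), N_profile as (nu_pos & N_eq); intro Hs.
  rewrite !M_eq, !N_eq.
  generalize (mu_pos s Hs) (nu_pos s Hs) (exp_pos w2); intros; field; lra.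
Qed.

Lemma mean_ratio_trichotomy w1 s1 w2 s2 : 0 <= s1 -> 0 <= s2 ->
  let a := exp (w1 + s1) in let b := exp (w1 - s1) in
  let c := exp (w2 + s2) in let d := exp (w2 - s2) in
  (s2 < s1 -> M a b / M c d < N a b / N c d) /\
  (s1 < s2 -> M a b / M c d > N a b / N c d) /\
  (s1 = s2 -> M a b / M c d = N a b / N c d).
Proof.
  intros Hs1 Hs2; repeat split; intro Hs.
  - now apply mean_ratio_lt.
  - now apply mean_ratio_gt.
  - subst s2; now apply mean_ratio_eq.
Qed.

End MeanRatios.

Lemma HM_GM_ratio_increasing : ratio_increasing (fun s => / cosh s) (fun _ => 1).
Proof.
  intros x y Hy Hxy; rewrite !Rdiv_1_l, !Rinv_inv; now apply cosh_increasing.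
Qed.

Lemma GM_LM_ratio_increasing : ratio_increasing (fun _ => 1) sinhc.
Proof. intros x y Hy Hxy; rewrite !Rdiv_1_r; now apply sinhc_increasing. Qed.

Lemma LM_IM_ratio_increasing : ratio_increasing sinhc (fun s => exp (xcoth s - 1)).
Proof.
  intros x y Hy Hxy.
  rewrite <- (exp_ln (sinhc x)), <- (exp_ln (sinhc y)) by (apply sinhc_pos; lra).
  unfold Rdiv; rewrite <- !exp_Ropp, <- !exp_plus; apply exp_increasing.
  generalize (xcoth_sub_ln_sinhc_increasing x y Hy Hxy); lra.
Qed.

Lemma IM_AM_ratio_increasing : ratio_increasing (fun s => exp (xcoth s - 1)) cosh.
Proof.
  intros x y Hy Hxy.
  rewrite <- (exp_ln (cosh x)), <- (exp_ln (cosh y)) by apply cosh_pos.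
  unfold Rdiv; rewrite <- !exp_Ropp, <- !exp_plus; apply exp_increasing.
  generalize (ln_cosh_sub_xcoth_increasing x y Hy Hxy); lra.
Qed.

Lemma exp_mul_lt x y u v : exp x * exp y < exp u * exp v -> x + y < u + v.
Proof. rewrite <- !exp_plus; apply exp_lt_inv. Qed.

Lemma exp_mul_eq x y u v : exp x * exp y = exp u * exp v -> x + y = u + v.
Proof. rewrite <- !exp_plus; apply exp_inv. Qed.

Theorem theorem3p4 (a b c d : R) :
  a >= b -> b >= c -> c >= d -> d > 0 ->
  (a * d - b * c > 0 ->
     HM a b / HM c d < GM a b / GM c d /\
     GM a b / GM c d < LM a b / LM c d /\
     LM a b / LM c d < IM a b / IM c d /\
     IM a b / IM c d < AM a b / AM c d) /\
  (a * d - b * c < 0 ->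
     HM a b / HM c d > GM a b / GM c d /\
     GM a b / GM c d > LM a b / LM c d /\
     LM a b / LM c d > IM a b / IM c d /\
     IM a b / IM c d > AM a b / AM c d) /\
  (a * d - b * c = 0 ->
     HM a b / HM c d = GM a b / GM c d /\
     GM a b / GM c d = LM a b / LM c d /\
     LM a b / LM c d = IM a b / IM c d /\
     IM a b / IM c d = AM a b / AM c d).
Proof.
  intros Hab Hbc Hcd Hd.
  destruct (exp_center_radius a b) as (w1 & s1 & Hs1 & -> & ->); [lra | lra |].
  destruct (exp_center_radius c d) as (w2 & s2 & Hs2 & -> & ->); [lra | lra |].
  destruct (mean_ratio_trichotomy HM_profile GM_profile HM_GM_ratio_increasing
              w1 s1 w2 s2 Hs1 Hs2) as (HG_lt & HG_gt & HG_eq).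
  destruct (mean_ratio_trichotomy GM_profile LM_profile GM_LM_ratio_increasing
              w1 s1 w2 s2 Hs1 Hs2) as (GL_lt & GL_gt & GL_eq).
  destruct (mean_ratio_trichotomy LM_profile IM_profile LM_IM_ratio_increasing
              w1 s1 w2 s2 Hs1 Hs2) as (LI_lt & LI_gt & LI_eq).
  destruct (mean_ratio_trichotomy IM_profile AM_profile IM_AM_ratio_increasing
              w1 s1 w2 s2 Hs1 Hs2) as (IA_lt & IA_gt & IA_eq).
  split; [| split]; intro Hsign.
  - pose proof (exp_mul_lt (w1 - s1) (w2 + s2) (w1 + s1) (w2 - s2) ltac:(lra)).
    repeat split; [apply HG_lt | apply GL_lt | apply LI_lt | apply IA_lt]; lra.
  - pose proof (exp_mul_lt (w1 + s1) (w2 - s2) (w1 - s1) (w2 + s2) ltac:(lra)).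
    repeat split; [apply HG_gt | apply GL_gt | apply LI_gt | apply IA_gt]; lra.
  - pose proof (exp_mul_eq (w1 + s1) (w2 - s2) (w1 - s1) (w2 + s2) ltac:(lra)).
    repeat split; [apply HG_eq | apply GL_eq | apply LI_eq | apply IA_eq]; lra.
Qed.
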